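(* Let $G=([N],\mathcal{E})$ be an undirected graph, $\sigma=(\sigma_1,\dots,\sigma_N)\in(0,1)^N$, $\sigma_m=\min_i\sigma_i$, $c>0$ and $q\in(1-\sigma_m,1)$, and let $C\subset[N]$ be a set of compromised clients. Then the distributed mechanism is $\epsilon$-differentially private with respect to the uncompromised clients, with $\epsilon=\frac{q}{c(q+\sigma_m-1)}$: for every $\delta\ge0$, every pair $\theta(0),\theta'(0)\in\mathbb{R}^N$ that differ only in one coordinate $k\notin C$ with $|\theta_k(0)-\theta'_k(0)|\le\delta$, and every measurable set $\mathit{Obs}$ of observation sequences, $$\Pr[\text{observation}\in\mathit{Obs}\mid\theta(0)]\le e^{\epsilon\delta}\Pr[\text{observation}\in\mathit{Obs}\mid\theta'(0)].$$
   Context: Laplace distribution $Lap(b)$: density $\frac{1}{2b}e^{-|x|/b}$. $N(i)=\{j:(i,j)\in\mathcal{E}\}$ is the neighbor set of $i$. Distributed mechanism with parameters $\sigma\in(0,1)^N$, $c>0$, $q\in(0,1)$: each client $i$ has states $\theta_i(t),y_i(t)$ with real initial value $\theta_i(0)$. At each round $t=0,1,2,\dots$: (i) client $i$ sends $x_i(t)=\theta_i(t)+\eta_i(t)$ to every $j\in N(i)$, where the $\eta_i(t)$ ($i\in[N],t\ge0$) are mutually independent with $\eta_i(t)\sim Lap(cq^t)$; (ii) client $i$ sets $y_i(t)=\frac{1}{|N(i)|+1}\sum_{j\in N(i)\cup\{i\}}x_j(t)$; (iii) client $i$ sets $\theta_i(t+1)=(1-\sigma_i)\theta_i(t)+\sigma_i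 y_i(t)$. The adversary's observation is the sequence of all messages $(x_i(t))_{i\in[N],t\ge0}$ together with the internal states $(\theta_j(t),y_j(t))_{t\ge0}$ of every compromised client $j\in C$. *)

From HB Require Import structures.
From mathcomp Require Import all_boot all_order all_algebra.
From mathcomp Require Import all_classical all_reals all_analysis.
Set Implicit Arguments. Unset Strict Implicit. Unset Printing Implicit Defensive.
Import Order.TTheory GRing.Theory Num.Theory.
Local Open Scope classical_set_scope.
Local Open Scope ring_scope.

Section DefsSec.
Variable R : realType.

Definition laplace_law (b : R) (B : set R) : \bar R :=
  (\int[@lebesgue_measure R]_(x in B) ((2 * b)^-1 * expR (- `|x| / b))%:E)%E.

Definition mutually_independent (d : measure_display) (T : measurableType d)
  (P : probability T R) (I : eqType) (X : I -> T -> R) : Prop :=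
  forall (S : seq I), uniq S ->
  forall (B : I -> set R), (forall i, measurable (B i)) ->
  P (\big[setI/setT]_(i <- S) (X i @^-1` B i)) =
  (\prod_(i <- S) P (X i @^-1` B i))%E.

Definition undirected_graph (N : nat) (e : rel 'I_N) : Prop :=
  symmetric e /\ irreflexive e.

Definition nbrs (N : nat) (e : rel 'I_N) (i : 'I_N) : {set 'I_N} :=
  [set j | e i j].

Definition msg (N : nat) (th eta : 'I_N -> R) (i : 'I_N) : R := th i + eta i.

Definition yval (N : nat) (e : rel 'I_N) (th eta : 'I_N -> R) (i : 'I_N) : R :=
  (#|nbrs e i|.+1)%:R^-1 *
  (\sum_(j in nbrs e i :|: [set i]) msg th eta j).

Fixpoint theta (N : nat) (e : rel 'I_N) (sigma : 'I_N -> R)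
  (th0 : 'I_N -> R) (eta : nat -> 'I_N -> R) (t : nat) : 'I_N -> R :=
  match t with
  | 0 => th0
  | t'.+1 => fun i =>
      (1 - sigma i) * theta e sigma th0 eta t' i
      + sigma i * yval e (theta e sigma th0 eta t') (eta t') i
  end.

(* Observation indices at each round: all messages x_i(t), and the internal
   states theta_j(t), y_j(t) of compromised clients j in C. *)
Definition obs_index (N : nat) (C : {set 'I_N}) : Type :=
  ('I_N + {j : 'I_N | j \in C} + {j : 'I_N | j \in C})%type.

Definition observation (N : nat) (e : rel 'I_N) (sigma : 'I_N -> R)
  (C : {set 'I_N}) (th0 : 'I_N -> R) (eta : nat -> 'I_N -> R) :
  nat -> obs_index C -> R :=
  fun t a =>
    match a with
    | inl (inl i) => msg (theta e sigma th0 eta t) (eta t) i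
    | inl (inr j) => theta e sigma th0 eta t (proj1_sig j)
    | inr j => yval e (theta e sigma th0 eta t) (eta t) (proj1_sig j)
    end.

Definition cylinder_gen (A : Type) : set (set (nat -> A -> R)) :=
  [set S | exists t a (B : set R), measurable B /\ S = [set f | B (f t a)]].

Definition obs_measurable (A : Type) (Obs : set (nat -> A -> R)) : Prop :=
  smallest (sigma_algebra setT) (@cylinder_gen A) Obs.

Definition sigma_min (N : nat) (sigma : 'I_N -> R) : R :=
  \big[Num.min/1]_(i < N) sigma i.

End DefsSec.

From HB Require Import structures.
From mathcomp Require Import all_boot all_order all_algebra.
From mathcomp Require Import all_classical all_reals all_analysis.
From mathcomp Require Import measurable_realfun ring lra.
Import Order.TTheory GRing.Theory Num.Theory.
Local Open Scope classical_set_scope.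
Local Open Scope ring_scope.

(* Write D = th0 k - th0' k. Adding (1 - sigma_k)^t D to the noise of client k
   at round t makes the run started at th0' send exactly the messages of the run
   started at th0, and the two runs then differ only in the state of client k,
   which the adversary does not see: the observation from th0 is the observation
   from th0' driven by shifted noise. Shifting a Lap(b) variable by s changes its
   density by a factor at most e^(|s|/b); independence multiplies these factors
   on cylinder sets, and the monotone class theorem extends the bound to every
   measurable set of noise sequences. The total exponent
   sum_t (1 - sigma_k)^t |D| / (c q^t) is a geometric series of ratio
   (1 - sigma_k)/q < 1, whose sum q |D| / (c (q + sigma_k - 1)) is at most
   eps * delta. *)

Section laplace_shift.
Context {R : realType}.
Local Notation mu := (@lebesgue_measure R).

Lemma measurable_addr (s : R) : measurable_fun setT (fun x : R => x + s).
Proof. by apply: measurable_funD => //; exact: measurable_cst. Qed.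

Lemma pushforward_lebesgue_addr (s : R) (A : set R) : measurable A ->
  pushforward mu ((fun x => x + s) : R -> measurableTypeR R) A = mu A.
Proof.
move=> mA; apply/esym/lebesgue_measure_unique => //=; first exact: measurable_addr.
move=> _ _ [[a b] _ <-]; rewrite /pushforward.
have -> : (fun x => x + s) @^-1` `]a, b]%classic = `](a - s), (b - s)]%classic.
  by apply/seteqP; split => x /=; rewrite !in_itv /= ltrBlDr lerBrDr.
rewrite !lebesgue_measure_itv /= !lte_fin ltrD2r; case: ifP => // _.
by rewrite -!EFinD; congr (_%:E); ring.
Qed.

Definition laplace_pdf (b x : R) : R := (2 * b)^-1 * expR (- `|x| / b).

Lemma laplace_pdf_ge0 (b x : R) : 0 < b -> 0 <= laplace_pdf b x.
Proof. by move=> b0; rewrite mulr_ge0 ?expR_ge0 // invr_ge0 mulr_ge0 // ltW. Qed.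

Lemma measurable_laplace_pdf (b s : R) :
  measurable_fun setT (fun x : R => laplace_pdf b (x - s)).
Proof.
apply: measurable_funM; first exact: measurable_cst.
apply: measurableT_comp => //; apply: measurable_funM; last exact: measurable_cst.
by apply: measurable_funN; apply: measurableT_comp => //; exact: measurable_addr.
Qed.

Lemma laplace_pdf_subr_le (b s x : R) : 0 < b ->
  laplace_pdf b (x - s) <= expR (`|s| / b) * laplace_pdf b x.
Proof.
move=> b0; rewrite /laplace_pdf mulrCA ler_pM2l ?invr_gt0 ?mulr_gt0 //.
rewrite -expRD ler_expR -mulrDl ler_pM2r ?invr_gt0 //.
have := ler_normD s (x - s); rewrite addrCA subrr addr0; lra.
Qed.

Lemma laplace_law_addr_le (b s : R) (A : set R) : 0 < b -> measurable A ->
  (laplace_law b [set x | A (x + s)%R] <= (expR (`|s| / b))%:E * laplace_law b A)%E.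
Proof.
move=> b0 mA.
have lawE B : laplace_law b B = (\int[mu]_(x in B) (laplace_pdf b x)%:E)%E by [].
have mpdf (t : R) : measurable_fun A (fun x => (laplace_pdf b (x - t))%:E).
  by apply/measurable_EFinP/measurable_funTS; exact: measurable_laplace_pdf.
have pdf0 (t x : R) : (0 <= (laplace_pdf b (x - t))%:E)%E.
  by rewrite lee_fin laplace_pdf_ge0.
rewrite !lawE.
under eq_integral do rewrite -[x in laplace_pdf b x](addrK s).
rewrite -(@ge0_integral_pushforward _ _ (measurableTypeR R) (measurableTypeR R) R
  _ (measurable_addr s) mu A (fun y => (laplace_pdf b (y - s))%:E)) //; last first.
  exact: mpdf.
rewrite (@eq_measure_integral _ _ _ _ mu); last first.
- by move=> ? B mB _; exact: pushforward_lebesgue_addr.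
- exact: measurable_addr.
under [X in (_ <= _ * X)%E]eq_integral do rewrite -[x in laplace_pdf b x]subr0.
rewrite -ge0_integralZl ?lee_fin ?expR_ge0 //; last exact: mpdf.
apply: ge0_le_integral => //; first exact: mpdf.
- by apply: emeasurable_funM => //; exact: mpdf.
- by move=> x _; rewrite lee_fin subr0 laplace_pdf_subr_le.
Qed.

End laplace_shift.

(* A list C of pairs (u, A) encodes the cylinder set of the f with f u \in A for
   every pair. The sets [set f | g (outcomes C f)], g a boolean function of the
   truth values of the constraints, form a ring generating the product
   sigma-algebra; [atom C0 C g] cuts such a set down by C0, and splitting on the
   constraints of C one at a time decomposes it into disjoint cylinder sets. *)
Section constraints.
Context {R : realType} {U : eqType}.
Implicit Types (C : seq (U * set R)) (f : U -> R).

Fixpoint satisfies C f : Prop :=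
  if C is p :: C' then p.2 (f p.1) /\ satisfies C' f else True.

Fixpoint constraint_at C (u : U) : set R :=
  if C is p :: C' then (if p.1 == u then p.2 else setT) `&` constraint_at C' u
  else setT.

Fixpoint measurable_constraints C : Prop :=
  if C is p :: C' then measurable p.2 /\ measurable_constraints C' else True.

Definition outcomes C f : seq bool := map (fun p => `[< p.2 (f p.1) >]) C.

Lemma measurable_constraint_at C u :
  measurable_constraints C -> measurable (constraint_at C u).
Proof.
elim: C => [|p C IH] /= => [_|[mp mC]]; first exact: measurableT.
by apply: measurableI; [case: ifP|exact: IH].
Qed.

Lemma constraint_at_notin C u : u \notin map fst C -> constraint_at C u = setT.
Proof.
elim: C => [|p C IH] //=; rewrite in_cons negb_or => /andP[pu uC].
by rewrite IH // eq_sym (negbTE pu) setIT.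
Qed.

Lemma satisfiesE C f :
  satisfies C f <-> forall u, u \in undup (map fst C) -> constraint_at C u (f u).
Proof.
under eq_forall do rewrite mem_undup.
elim: C => [|p C IH] /=; first by split.
split.
- move=> [pf /IH Cf] u; rewrite in_cons => /orP[/eqP ->|uC].
    split; first by rewrite eqxx.
    by have [/Cf|/constraint_at_notin ->] := boolP (p.1 \in map fst C).
  by split; [case: eqP => // <-|exact: Cf].
- move=> Cf; split; first by have [] := Cf p.1; rewrite ?inE ?eqxx //= eqxx.
  by apply/IH => u uC; have [] := Cf u; rewrite // in_cons uC orbT.
Qed.

Lemma measurable_constraints_cat C1 C2 :
  measurable_constraints C1 -> measurable_constraints C2 ->
  measurable_constraints (C1 ++ C2).
Proof. by elim: C1 => [|p C IH] //= [mp mC] m2; split => //; exact: IH. Qed.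

Definition atom C0 C (g : seq bool -> bool) : set (U -> R) :=
  [set f | satisfies C0 f /\ g (outcomes C f)].

Lemma atom_nil C0 g :
  atom C0 [::] g = if g [::] then [set f | satisfies C0 f] else set0.
Proof. by apply/seteqP; split => f; rewrite /atom /=; case: (g [::]) => //= -[]. Qed.

Lemma atom_cons p C0 C g : atom C0 (p :: C) g =
  atom (p :: C0) C (fun v => g (true :: v)) `|`
  atom ((p.1, ~` p.2) :: C0) C (fun v => g (false :: v)).
Proof.
apply/seteqP; split => f /=; rewrite /atom /outcomes /=.
- by move=> [C0f]; case: (pselect (p.2 (f p.1))) => h;
    [rewrite asboolT // => ?; left|rewrite asboolF // => ?; right].
- case => -[[pf C0f] gf]; split => //.
    by rewrite asboolT.
  by rewrite asboolF.
Qed.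

Lemma atom_cons_disjoint p C0 C g g' :
  atom (p :: C0) C g `&` atom ((p.1, ~` p.2) :: C0) C g' = set0.
Proof. by apply/seteqP; split => f //= [[[pf _] _] [[npf _] _]]. Qed.

End constraints.

Lemma prode_le_expR_sum {R : realType} {I : Type} (S : seq I)
    (x y : I -> \bar R) (a : I -> R) :
  (forall i, 0 <= x i)%E -> (forall i, 0 <= y i)%E ->
  (forall i, x i <= (expR (a i))%:E * y i)%E ->
  (\prod_(i <- S) x i <= (expR (\sum_(i <- S) a i))%:E * \prod_(i <- S) y i)%E.
Proof.
move=> x0 y0 xy; elim: S => [|i S IH]; first by rewrite !big_nil expR0 mul1e.
rewrite !big_cons expRD EFinM muleACA.
by apply: lee_pmul => //; exact: prode_ge0.
Qed.

Lemma lee_cvg_scale {R : realType} (u v : nat -> \bar R) (lu lv : \bar R) (r : R) :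
  u @ \oo --> lu -> v @ \oo --> lv -> (forall n, u n <= r%:E * v n)%E ->
  (lu <= r%:E * lv)%E.
Proof.
move=> ulu vlv uv; have rvlv := @cvgeZl _ _ _ _ _ r%:E isT vlv.
rewrite -(cvg_lim _ ulu) // -(cvg_lim _ rvlv) //.
apply: lee_lim; [by apply/cvg_ex; exists lu|by apply/cvg_ex; eexists; exact: rvlv|].
exact: nearW.
Qed.

Definition coordinate_sets {R : realType} {U : Type} : set (set (U -> R)) :=
  [set B | exists u (A : set R), measurable A /\ B = [set f | A (f u)]].

Section boolean_cylinders.
Context {R : realType} {U : eqType}.

Definition boolean_cylinders : set (set (U -> R)) :=
  [set B | exists C, measurable_constraints C /\
     exists g : seq bool -> bool, B = [set f | g (outcomes C f)]].

Lemma setring_boolean_cylinders : setring boolean_cylinders.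
Proof.
have take_outcomes C1 C2 (f : U -> R) :
    take (size C1) (outcomes (C1 ++ C2) f) = outcomes C1 f.
  by rewrite /outcomes map_cat -(size_map (fun p : U * set R => `[< p.2 (f p.1) >]) C1)
    take_size_cat.
have drop_outcomes C1 C2 (f : U -> R) :
    drop (size C1) (outcomes (C1 ++ C2) f) = outcomes C2 f.
  by rewrite /outcomes map_cat -(size_map (fun p : U * set R => `[< p.2 (f p.1) >]) C1)
    drop_size_cat.
split.
- exists [::]; split => //; exists (fun _ => false).
  by apply/seteqP; split => f.
- move=> _ _ [C1 [mC1 [g1 ->]]] [C2 [mC2 [g2 ->]]].
  exists (C1 ++ C2); split; first exact: measurable_constraints_cat.
  exists (fun v => g1 (take (size C1) v) || g2 (drop (size C1) v)).
  apply/seteqP; split => f /=; rewrite take_outcomes drop_outcomes.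
  + by case=> ->; rewrite ?orbT.
  + by case/orP; [left|right].
- move=> _ _ [C1 [mC1 [g1 ->]]] [C2 [mC2 [g2 ->]]].
  exists (C1 ++ C2); split; first exact: measurable_constraints_cat.
  exists (fun v => g1 (take (size C1) v) && ~~ g2 (drop (size C1) v)).
  apply/seteqP; split => f /=; rewrite take_outcomes drop_outcomes.
  + by case=> -> /negP ->.
  + by case/andP => g1f /negP g2f.
Qed.

Lemma coordinate_sets_sub_sigma_ring :
  @coordinate_sets R U `<=` <<sr boolean_cylinders>>.
Proof.
move=> _ [u [A [mA ->]]]; apply: sub_gen_smallest.
exists [:: (u, A)]; split => //; exists (head false).
by apply/seteqP; split => f /= /asboolP.
Qed.

Lemma sigma_ring_boolean_cylindersT : <<sr boolean_cylinders>> setT.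
Proof.
apply: sub_gen_smallest; exists [::]; split => //; exists (fun _ => true).
by apply/seteqP; split => f.
Qed.

End boolean_cylinders.

Section measurable_preimage.
Context {R : realType} {d : measure_display} {T : measurableType d} {U : eqType}.
Variable zeta : T -> U -> R.
Hypothesis measurable_zeta : forall u, measurable_fun setT (fun w => zeta w u).

Lemma measurable_preimage_satisfies (C : seq (U * set R)) : measurable_constraints C ->
  measurable (zeta @^-1` [set f | satisfies C f]).
Proof.
elim: C => [|p C IH] /=; first by move=> _; exact: measurableT.
move=> [mp mC]; apply: measurableI; last exact: IH.
by rewrite -[X in measurable X]setTI; exact: measurable_zeta.
Qed.

Lemma measurable_preimage_atom (C0 C : seq (U * set R)) g :
  measurable_constraints C0 -> measurable_constraints C ->
  measurable (zeta @^-1` atom C0 C g).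
Proof.
elim: C C0 g => [|p C IH] C0 g mC0 /=.
  move=> _; rewrite atom_nil; case: (g [::]); first exact: measurable_preimage_satisfies.
  by rewrite preimage_set0; exact: measurable0.
move=> [mp mC]; rewrite atom_cons preimage_setU.
by apply: measurableU; apply: IH => //; split => //; exact: measurableC.
Qed.

End measurable_preimage.

Section shifted_noise.
Context {R : realType} {d : measure_display} {T : measurableType d}.
Variables (P : probability T R) (U : choiceType) (eta : U -> T -> R) (b s : U -> R) (L : R).
Hypothesis measurable_eta : forall u, measurable_fun setT (eta u).
Hypothesis eta_indep : mutually_independent P eta.
Hypothesis eta_laplace : forall u (B : set R), measurable B ->
  P (eta u @^-1` B) = laplace_law (b u) B.
Hypothesis b_gt0 : forall u, 0 < b u.
Hypothesis shift_cost_le : forall S, uniq S -> \sum_(u <- S) `|s u| / b u <= L.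

Local Notation noise := (fun w u => eta u w).
Local Notation shifted := (fun w u => eta u w + s u).

Lemma measurable_shifted u : measurable_fun setT (fun w => shifted w u).
Proof. by apply: measurable_funD => //; exact: measurable_cst. Qed.

Lemma prob_forall_in (S : seq U) (B : U -> set R) :
  uniq S -> (forall u, measurable (B u)) ->
  P [set w | forall u, u \in S -> B u (eta u w)] = (\prod_(u <- S) P (eta u @^-1` B u))%E.
Proof. by move=> uS mB; rewrite -eta_indep // -bigcap_seq. Qed.

Lemma shift_le_satisfies (C : seq (U * set R)) : measurable_constraints C ->
  (P (shifted @^-1` [set f | satisfies C f]) <=
   (expR L)%:E * P (noise @^-1` [set f | satisfies C f]))%E.
Proof.
(* Merging the constraints on each coordinate lets independence act on distinct
   coordinates. *)
move=> mC; set S := undup (map fst C).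
have mCu u : measurable (constraint_at C u) by exact: measurable_constraint_at.
have mCsu u : measurable [set x | constraint_at C u (x + s u)].
  by rewrite -[X in measurable X]setTI; exact: measurable_addr.
have -> : shifted @^-1` [set f | satisfies C f] =
    [set w | forall u, u \in S -> [set x | constraint_at C u (x + s u)] (eta u w)].
  by apply/seteqP; split => w /=; rewrite satisfiesE.
have -> : noise @^-1` [set f | satisfies C f] =
    [set w | forall u, u \in S -> constraint_at C u (eta u w)].
  by apply/seteqP; split => w /=; rewrite satisfiesE.
rewrite (prob_forall_in _ (fun u => [set x | constraint_at C u (x + s u)])) ?undup_uniq //.
rewrite prob_forall_in ?undup_uniq //.
apply: (le_trans (prode_le_expR_sum _ _ (fun u => P (eta u @^-1` constraint_at C u))
  (fun u => `|s u| / b u) _ _ _)).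
- by move=> u; exact: measure_ge0.
- by move=> u; exact: measure_ge0.
- by move=> u; rewrite !eta_laplace //; exact: laplace_law_addr_le.
apply: lee_wpmul2r; first exact: prode_ge0.
by rewrite lee_fin ler_expR shift_cost_le ?undup_uniq.
Qed.

Lemma shift_le_atom (C0 C : seq (U * set R)) g :
  measurable_constraints C0 -> measurable_constraints C ->
  (P (shifted @^-1` atom C0 C g) <= (expR L)%:E * P (noise @^-1` atom C0 C g))%E.
Proof.
elim: C C0 g => [|p C IH] C0 g mC0 /=.
  move=> _; rewrite atom_nil; case: (g [::]); first exact: shift_le_satisfies.
  by rewrite !preimage_set0 measure0 mule0.
move=> [mp mC]; rewrite atom_cons !preimage_setU.
have mC1 : measurable_constraints (p :: C0) by [].
have mC2 : measurable_constraints ((p.1, ~` p.2) :: C0).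
  by split => //; exact: measurableC.
have disj (zeta : T -> U -> R) g1 g2 :
    zeta @^-1` atom (p :: C0) C g1 `&` zeta @^-1` atom ((p.1, ~` p.2) :: C0) C g2 = set0.
  by rewrite -preimage_setI atom_cons_disjoint preimage_set0.
rewrite !measureU ?disj //; try by apply: measurable_preimage_atom => // u;
  first [exact: measurable_shifted|exact: measurable_eta].
rewrite ge0_muleDr; [|exact: measure_ge0|exact: measure_ge0].
by apply: leeD; exact: IH.
Qed.

Definition shift_bounded : set (set (U -> R)) :=
  [set B | [/\ measurable (shifted @^-1` B), measurable (noise @^-1` B) &
     (P (shifted @^-1` B) <= (expR L)%:E * P (noise @^-1` B))%E]].

Lemma boolean_cylinders_shift_bounded : boolean_cylinders `<=` shift_bounded.
Proof.
move=> _ [C [mC [g ->]]].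
have -> : [set f | g (outcomes C f)] = atom [::] C g.
  by apply/seteqP; split => f /=; [move=> gf; split|case].
split; last exact: shift_le_atom.
- by apply: measurable_preimage_atom => // u; exact: measurable_shifted.
- by apply: measurable_preimage_atom => // u; exact: measurable_eta.
Qed.

Lemma monotone_shift_bounded : monotone shift_bounded.
Proof.
have P_finite (A : set T) : measurable A -> (P A < +oo)%E.
  by move=> mA; rewrite (le_lt_trans (probability_le1 _ mA)) ?ltry.
split=> F monoF BF; rewrite /shift_bounded /= ?preimage_bigcup ?preimage_bigcap.
- have mS n : measurable (shifted @^-1` F n) by case: (BF n).
  have m0 n : measurable (noise @^-1` F n) by case: (BF n).
  have nd (zeta : T -> U -> R) : nondecreasing_seq (fun n => zeta @^-1` F n).
    move=> n m nm; have /subsetPset Fnm := monoF _ _ nm.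
    by apply/subsetPset; exact: preimage_subset.
  have mS' := bigcupT_measurable _ mS; have m0' := bigcupT_measurable _ m0.
  split => //; apply: lee_cvg_scale (nondecreasing_cvg_mu mS mS' (nd _))
    (nondecreasing_cvg_mu m0 m0' (nd _)) _.
  by move=> n; case: (BF n).
- have mS n : measurable (shifted @^-1` F n) by case: (BF n).
  have m0 n : measurable (noise @^-1` F n) by case: (BF n).
  have ni (zeta : T -> U -> R) : nonincreasing_seq (fun n => zeta @^-1` F n).
    move=> n m nm; have /subsetPset Fnm := monoF _ _ nm.
    by apply/subsetPset; exact: preimage_subset.
  have mS' := bigcapT_measurable mS; have m0' := bigcapT_measurable m0.
  split => //; apply: lee_cvg_scale (nonincreasing_cvg_mu (P_finite _ (mS 0%N)) mS mS' (ni _))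
    (nonincreasing_cvg_mu (P_finite _ (m0 0%N)) m0 m0' (ni _)) _.
  by move=> n; case: (BF n).
Qed.

Lemma shift_le_product_measurable (B : set (U -> R)) : <<s coordinate_sets>> B ->
  (P (shifted @^-1` B) <= (expR L)%:E * P (noise @^-1` B))%E.
Proof.
move=> sB.
have : <<sr boolean_cylinders>> B.
  apply: smallest_sub sB; last exact: coordinate_sets_sub_sigma_ring.
  have [sr0 srD srU] := smallest_sigma_ring (@boolean_cylinders R U).
  split => // A srA; apply: srD => //; exact: sigma_ring_boolean_cylindersT.
by case/(monotone_setring_sub_g_sigma_ring monotone_shift_bounded
  setring_boolean_cylinders boolean_cylinders_shift_bounded).
Qed.

End shifted_noise.

Section observation_shift.
Context {R : realType} {N : nat} (e : rel 'I_N) (sigma : 'I_N -> R).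
Variables (th0 th0' : 'I_N -> R) (k : 'I_N).
Hypothesis th0E : forall i, i != k -> th0 i = th0' i.

Definition noise_shift (t : nat) (i : 'I_N) : R :=
  if i == k then (1 - sigma k) ^+ t * (th0 k - th0' k) else 0.

Local Notation shifted eta := (fun t i => eta t i + noise_shift t i).

Lemma theta_shift (eta : nat -> 'I_N -> R) t i :
  theta e sigma th0' (shifted eta) t i = theta e sigma th0 eta t i - noise_shift t i.
Proof.
elim: t i => [|t IH] i /=.
  rewrite /noise_shift; case: eqP => [->|/eqP ik]; first by rewrite expr0 mul1r; ring.
  by rewrite th0E // subr0.
have -> : yval e (theta e sigma th0' (shifted eta) t) (shifted eta t) i =
          yval e (theta e sigma th0 eta t) (eta t) i.
  by rewrite /yval; congr (_ * _); apply: eq_bigr => j _; rewrite /msg IH; ring.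
rewrite IH /noise_shift; case: eqP => [->|_]; last by ring.
by rewrite exprS; ring.
Qed.

Lemma msg_shift (eta : nat -> 'I_N -> R) t j :
  msg (theta e sigma th0' (shifted eta) t) (shifted eta t) j =
  msg (theta e sigma th0 eta t) (eta t) j.
Proof. by rewrite /msg theta_shift; ring. Qed.

Lemma observation_shift (C : {set 'I_N}) (eta : nat -> 'I_N -> R) : k \notin C ->
  @observation R N e sigma C th0' (shifted eta) = @observation R N e sigma C th0 eta.
Proof.
move=> kC; apply/funext => t; apply/funext => -[[i|[j jC]]|[j jC]] /=.
- exact: msg_shift.
- rewrite theta_shift /noise_shift; case: eqP => [jk|]; last by rewrite subr0.
  by move: kC; rewrite -jk jC.
- by rewrite /yval; congr (_ * _); apply: eq_bigr => l _; exact: msg_shift.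
Qed.

End observation_shift.

Lemma sum_uniq_expr_le {R : realType} (r : R) (S : seq nat) : 0 < r < 1 -> uniq S ->
  \sum_(t <- S) r ^+ t <= (1 - r)^-1.
Proof.
move=> /andP[r0 r1] uS; set m := (\max_(t <- S) t).+1.
have -> : \sum_(t <- S) r ^+ t = \sum_(0 <= t < m | t \in S) r ^+ t.
  rewrite -[RHS]big_filter; apply: perm_big; apply: uniq_perm => //.
    by rewrite filter_uniq // iota_uniq.
  move=> t; rewrite mem_filter mem_index_iota /=.
  by case tS: (t \in S); rewrite //= ltnS leq_bigmax_seq.
apply: (le_trans (y := \sum_(0 <= t < m) r ^+ t)).
  by rewrite big_mkcond /=; apply: ler_sum => t _; case: ifP => // _; exact: exprn_ge0 (ltW r0).
rewrite -{1}(add0n m) geometric_partial_tail expr0 -[X in _ <= X]div1r.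
by apply: geometric_le_lim; rewrite ?gtr0_norm.
Qed.

Lemma sum_shift_cost_le {R : realType} {I : eqType} (S : seq (nat * I)) (k : I)
    (a c q D : R) :
  uniq S -> 0 < a < q -> 0 < c ->
  \sum_(u <- S) `|if u.2 == k then a ^+ u.1 * D else 0| / (c * q ^+ u.1)
    <= q / (c * (q - a)) * `|D|.
Proof.
move=> uS /andP[a0 aq] c0; have q0 : 0 < q by exact: lt_trans aq.
set r := a / q; set M := `|D| / c.
have r01 : 0 < r < 1 by rewrite divr_gt0 //= ltr_pdivrMr // mul1r.
have termE u : `|if u.2 == k then a ^+ u.1 * D else 0| / (c * q ^+ u.1) =
    if u.2 == k then r ^+ u.1 * M else 0.
  case: eqP => _; last by rewrite normr0 mul0r.
  rewrite normrM normrX ger0_norm ?(ltW a0) // /r /M expr_div_n.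
  by field; rewrite expf_neq0 ?lt0r_neq0.
rewrite (eq_bigr _ (fun u _ => termE u)) -big_mkcond -big_filter /=.
rewrite -(big_map fst xpredT (fun t => r ^+ t * M)) -big_distrl /=.
have uT : uniq (map fst [seq u <- S | u.2 == k]).
  rewrite map_inj_in_uniq ?filter_uniq // => -[t1 i1] [t2 i2].
  by rewrite !mem_filter /= => /andP[/eqP -> _] /andP[/eqP -> _] ->.
apply: (le_trans (ler_wpM2r _ (sum_uniq_expr_le _ _ r01 uT))).
  by rewrite /M divr_ge0 // ltW.
rewrite le_eqVlt; apply/orP; left; apply/eqP; rewrite /r /M; field.
by rewrite !lt0r_neq0 // subr_gt0.
Qed.

Lemma privacy_budget_le {R : realFieldType} {sm sk c q D delta : R} :
  sm <= sk -> 0 < c -> 0 < q -> 1 - sm < q -> `|D| <= delta ->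
  q / (c * (q - (1 - sk))) * `|D| <= q / (c * (q + sm - 1)) * delta.
Proof.
move=> smk c0 q0 smq Dd.
have pos0 : 0 < c * (q + sm - 1) by rewrite mulr_gt0 //; lra.
have pos1 : 0 < c * (q - (1 - sk)) by rewrite mulr_gt0 //; lra.
apply: ler_pM => //; first by rewrite divr_ge0 // ltW.
rewrite ler_pM2l // lef_pV2 ?posrE // ler_pM2l //; lra.
Qed.

Lemma measurable_fun_sum_in {d : measure_display} {T : measurableType d} {R : realType}
    {I : finType} (A : {set I}) (h : I -> T -> R) :
  (forall i, measurable_fun setT (h i)) ->
  measurable_fun setT (fun x => \sum_(i in A) h i x).
Proof.
move=> mh; rewrite (_ : (fun x => _) = (fun x => \sum_(i <- enum A) h i x)).
  exact: measurable_sum.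
by apply/funext => x; rewrite big_enum.
Qed.

Section observation_measurable.
Context {R : realType} {N : nat} (e : rel 'I_N) (sigma : 'I_N -> R) (C : {set 'I_N}).
Variable th0 : 'I_N -> R.
Local Notation U := (nat * 'I_N)%type.
Local Notation noise_space := (g_sigma_algebraType (@coordinate_sets R U : set (set (U -> R^o)))).

Lemma measurable_coordinate (u : U) :
  measurable_fun (setT : set noise_space) (fun f : noise_space => f u).
Proof. by move=> _ A mA; rewrite setTI; apply: sub_gen_smallest; exists u, A. Qed.

Lemma measurable_theta t i : measurable_fun (setT : set noise_space)
  (fun f : noise_space => theta e sigma th0 (fun t i => f (t, i)) t i).
Proof.
elim: t i => [|t IH] i /=; first exact: measurable_cst.
apply: measurable_funD; apply: measurable_funM; try exact: measurable_cst.
  exact: IH.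
apply: measurable_funM; first exact: measurable_cst.
apply: measurable_fun_sum_in => j; apply: measurable_funD; first exact: IH.
exact: (measurable_coordinate (t, j)).
Qed.

Lemma measurable_observation t a : measurable_fun (setT : set noise_space)
  (fun f : noise_space => @observation R N e sigma C th0 (fun t i => f (t, i)) t a).
Proof.
have mmsg j : measurable_fun (setT : set noise_space) (fun f : noise_space =>
    msg (theta e sigma th0 (fun t i => f (t, i)) t) (fun i => f (t, i)) j).
  by apply: measurable_funD; [exact: measurable_theta|exact: (measurable_coordinate (t, j))].
case: a => [[i|j]|j] /=; first exact: mmsg.
- exact: measurable_theta.
- apply: measurable_funM; first exact: measurable_cst.
  by apply: measurable_fun_sum_in.
Qed.

Lemma observation_preimage_measurable (Obs : set (nat -> obs_index C -> R)) :
  obs_measurable Obs ->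
  <<s @coordinate_sets R U>>
    [set f : U -> R | Obs (@observation R N e sigma C th0 (fun t i => f (t, i)))].
Proof.
pose obs (f : noise_space) := @observation R N e sigma C th0 (fun t i => f (t, i)).
pose H := [set O : set (nat -> obs_index C -> R) | measurable (obs @^-1` O)].
have sigmaH : sigma_algebra setT H.
  split.
  - by rewrite /H /= preimage_set0; exact: measurable0.
  - by move=> A HA; rewrite /H /= setTD preimage_setC; exact: measurableC.
  - by move=> A HA; rewrite /H /= preimage_bigcup; exact: bigcupT_measurable.
have cylH : @cylinder_gen R (obs_index C) `<=` H.
  move=> _ [t [a [A [mA ->]]]].
  by have := measurable_observation t a measurableT A mA; rewrite setTI.
by move=> mObs; exact: (mObs H (conj sigmaH cylH)).
Qed.

End observation_measurable.

Theorem mainTheorem5 (R : realType) (N : nat) (e : rel 'I_N)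
  (sigma : 'I_N -> R) (c q : R) (C : {set 'I_N})
  (d : measure_display) (T : measurableType d) (P : probability T R)
  (eta : nat -> 'I_N -> T -> R) :
  undirected_graph e ->
  (forall i, 0 < sigma i < 1) ->
  0 < c ->
  1 - sigma_min sigma < q < 1 ->
  (forall t i, measurable_fun setT (eta t i)) ->
  mutually_independent P (fun k : nat * 'I_N => eta k.1 k.2) ->
  (forall t i (B : set R), measurable B ->
     P (eta t i @^-1` B) = laplace_law (c * q ^+ t) B) ->
  let eps := q / (c * (q + sigma_min sigma - 1)) in
  forall (delta : R) (th0 th0' : 'I_N -> R) (k : 'I_N),
    0 <= delta ->
    k \notin C ->
    (forall i, i != k -> th0 i = th0' i) ->
    `|th0 k - th0' k| <= delta ->
    forall Obs : set (nat -> obs_index C -> R),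
      obs_measurable Obs ->
      (P [set w | Obs (@observation R N e sigma C th0 (fun t i => eta t i w))]
       <= (expR (eps * delta))%:E *
          P [set w | Obs (@observation R N e sigma C th0' (fun t i => eta t i w))])%E.
Proof.
move=> _ sigma01 c_gt0 /andP[sm_q _] meta indep law eps delta th0 th0' k _ kC th0E dist
  Obs mObs.
have [_ sk_lt1] := andP (sigma01 k).
have sm_le1 : sigma_min sigma <= 1 by exact: bigmin_le_id.
have sm_sk : sigma_min sigma <= sigma k by exact: bigmin_le.
have q_gt0 : 0 < q by lra.
have cost S : uniq S -> \sum_(u <- S)
    `|noise_shift sigma th0 th0' k u.1 u.2| / (c * q ^+ u.1) <= eps * delta.
  have a_range : 0 < 1 - sigma k < q by apply/andP; split; lra.
  move=> uS; exact: le_trans (sum_shift_cost_le _ k _ _ _ _ uS a_range c_gt0)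
    (privacy_budget_le sm_sk c_gt0 q_gt0 sm_q dist).
have -> : [set w | Obs (@observation R N e sigma C th0 (fun t i => eta t i w))] =
    [set w | Obs (@observation R N e sigma C th0'
      (fun t i => eta t i w + noise_shift sigma th0 th0' k t i))].
  by apply/seteqP; split => w /=; rewrite observation_shift.
exact: (shift_le_product_measurable P _ (fun u => eta u.1 u.2) (fun u => c * q ^+ u.1)
  (fun u => noise_shift sigma th0 th0' k u.1 u.2) (eps * delta)
  (fun u => meta u.1 u.2) indep (fun u => law u.1 u.2)
  (fun u => mulr_gt0 c_gt0 (exprn_gt0 _ q_gt0)) cost _
  (observation_preimage_measurable e sigma _ th0' _ mObs)).
Qed.
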